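(* Let $W$ be a finite Weyl group acting on a real inner product space $V$, with positive system $\Phi_+$ and Weyl arrangement $\mathcal{A}=\{H_\alpha\mid\alpha\in\Phi_+\}$, and let $\mathbf{a},\mathbf{b}:\mathcal{A}\to\mathbb{Z}_{\ge0}$ be multiplicities. Let $\overline{H_\infty}=\{x_0=0\}\subset\mathbb{R}\oplus V$. Then: (i) for any $X\in L\left(\mathbf{c}\left(\mathcal{A}^{[-\mathbf{a},\mathbf{b}]}\right)\right)$ with $X\subseteq\overline{H_\infty}$, there exists a unique $Y\in L(\mathcal{A})$ such that $X=\mathbf{c}Y\cap\overline{H_\infty}$; (ii) for such $X$ and $Y$, $$\left(\mathbf{c}\left(\mathcal{A}^{[-\mathbf{a},\mathbf{b}]}\right)\right)_X=\mathbf{c}\left((\mathcal{A}_Y)^{[-\mathbf{a}_Y,\mathbf{b}_Y]}\right)=\mathbf{c}\left(\mathcal{A}(W_Y)^{[-\mathbf{a}_Y,\mathbf{b}_Y]}\right),$$ where $\mathbf{a}_Y,\mathbf{b}_Y$ are the restrictions of $\mathbf{a},\mathbf{b}$ to $\mathcal{A}_Y$.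
   Context: For $\alpha\in\Phi_+$ and $k\in\mathbb{Z}$, $H_\alpha=\{\alpha=0\}$ and $H_{\alpha,k}=\{\alpha=k\}$. For a subarrangement $\mathcal{B}\subseteq\mathcal{A}$ and multiplicities $\mathbf{a},\mathbf{b}$ on $\mathcal{B}$, the deformation is the affine arrangement $\mathcal{B}^{[-\mathbf{a},\mathbf{b}]}=\{H_{\alpha,k}\mid \alpha\in\Phi_+,\ H_\alpha\in\mathcal{B},\ k\in\mathbb{Z},\ -\mathbf{a}(H_\alpha)\le k\le\mathbf{b}(H_\alpha)\}$. The coning $\mathbf{c}(\mathcal{C})$ of an affine arrangement $\mathcal{C}$ in $V$ is the central arrangement in $\mathbb{R}\oplus V$ (extra coordinate $x_0$) consisting of $\overline{H_\infty}=\{x_0=0\}$ together with $\mathbf{c}H=\{\alpha-kx_0=0\}$ for each $H=\{\alpha=k\}\in\mathcal{C}$. $L(\cdot)$ denotes the intersection lattice (the set of nonempty intersections of subsets of hyperplanes, including the whole space). For $Y=H_1\cap\dots\cap H_r\in L(\mathcal{A})$, $\mathbf{c}Y=\mathbf{c}H_1\cap\dots\cap\mathbf{c}H_r$. For a central arrangement $\mathcal{C}$ and an element $Z$ of its intersection lattice, the localization is $\mathcal{C}_Z=\{H\in\mathcal{C}\mid Z\subseteq H\}$. $W_Y$ is the parabolic subgroup of $W$ fixing $Y$ pointwise, and $\mathcal{A}(W_Y)$ is the arrangement of its reflecting hyperplanes. *)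

From mathcomp Require Import all_boot all_order all_algebra.
From mathcomp Require Import boolp classical_sets reals.
Set Implicit Arguments. Unset Strict Implicit. Unset Printing Implicit Defensive.
Import Order.TTheory GRing.Theory Num.Theory.
Local Open Scope ring_scope.
Local Open Scope classical_set_scope.

Section WeylDefs.
Variables (R : realType) (n : nat).
Notation V := 'rV[R]_n.

Definition dot (u v : V) : R := (u *m v^T) 0 0.

Definition hyp (al : V) (k : R) : set V := [set x | dot al x = k].

Definition refl (be : V) : V -> V :=
  fun x => x - ((2 * dot be x) / dot be be) *: be.

Definition root_system (Phi : seq V) : Prop :=
  [/\ forall al, al \in Phi -> al != 0,
      forall al, al \in Phi -> - al \in Phi,
      forall al (c : R), al \in Phi -> c *: al \in Phi -> c = 1 \/ c = -1,
      forall al be, al \in Phi -> be \in Phi -> refl al be \in Phi &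
      forall al be, al \in Phi -> be \in Phi ->
        exists z : int, 2 * dot be al / dot al al = z%:~R].

Definition positive_system (Phi Phip : seq V) : Prop :=
  exists v : V, (forall al, al \in Phi -> dot v al != 0) /\
    (forall al, (al \in Phip) <-> (al \in Phi /\ 0 < dot v al)).

Definition weyl_arr (Phip : seq V) : set (set V) :=
  [set H | exists2 al, al \in Phip & H = hyp al 0].

(* deformation B^{[-a,b]} of a subarrangement B, as the set of defining
   pairs (alpha, k) of the hyperplanes H_{alpha,k} *)
Definition deform (Phip : seq V) (B : set (set V)) (a b : V -> nat)
  : set (V * R) :=
  [set p | exists al, exists k : int,
     [/\ al \in Phip, B (hyp al 0), - (a al)%:Z <= k, k <= (b al)%:Z
       & p = (al, k%:~R)]].

(* points of R (+) V are pairs (x0, x) *)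
Definition Hinf : set (R * V) := [set p | p.1 = 0].

(* coning of the hyperplane {alpha = k} : {alpha - k x0 = 0} *)
Definition chyp (p : V * R) : set (R * V) :=
  [set q | dot p.1 q.2 - p.2 * q.1 = 0].

Definition cone (C : set (V * R)) : set (set (R * V)) :=
  [set Hinf] `|` [set H | exists2 p, C p & H = chyp p].

(* cY for Y = H_1 cap ... cap H_r in L(A) (central H_i):
   cY = cH_1 cap ... cap cH_r = {(x0, x) | x in Y} *)
Definition coneY (Y : set V) : set (R * V) := [set q | Y q.2].

Inductive in_W (Phi : seq V) : (V -> V) -> Prop :=
| W_id : in_W Phi id
| W_step al w : al \in Phi -> in_W Phi w -> in_W Phi (refl al \o w).

Definition parabolic (Phi : seq V) (Y : set V) : set (V -> V) :=
  [set w | in_W Phi w /\ forall y, Y y -> w y = y].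

Definition refl_arr (G : set (V -> V)) : set (set V) :=
  [set H | exists be : V, [/\ be != 0, G (refl be) & H = hyp be 0]].

End WeylDefs.

Definition int_lattice (T : Type) (C : set (set T)) : set (set T) :=
  [set X | exists (r : nat) (Hs : 'I_r -> set T), (forall i, C (Hs i)) /\
     X = \bigcap_(i in [set: 'I_r]) Hs i /\ X !=set0].

Definition localize (T : Type) (C : set (set T)) (Z : set T) : set (set T) :=
  [set H | C H /\ Z `<=` H].

From mathcomp Require Import all_boot all_order all_algebra.
From mathcomp Require Import boolp classical_sets reals.
Set Implicit Arguments. Unset Strict Implicit. Unset Printing Implicit Defensive.
Import Order.TTheory GRing.Theory Num.Theory.
Local Open Scope ring_scope.
Local Open Scope classical_set_scope.

(* A flat X inside {x0 = 0} is recovered from its slice {x | (0, x) in X}: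
   the slice of [chyp (al, k)] is [H_al] whatever k is, the slice of [Hinf]
   is everything, and a flat of the coned deformation always contains the
   origin.  So the slice Y is an intersection of hyperplanes of A, it is the
   only Y with X = cY cap Hinf, and a hyperplane {al = k x0} contains X iff
   H_al contains Y, i.e. iff s_al fixes Y pointwise. *)

Lemma int_lattice_bigcap (T : Type) (C : set (set T)) r (Hs : 'I_r -> set T) :
  (forall i, Hs i = setT \/ C (Hs i)) ->
  \bigcap_(i in [set: 'I_r]) Hs i !=set0 ->
  int_lattice C (\bigcap_(i in [set: 'I_r]) Hs i).
Proof.
move=> HsC ne; pose A := [set i : 'I_r | `[< C (Hs i) >]].
exists #|A|, (fun j => Hs (enum_val j)); split; [|split] => //.
  by move=> j; have := enum_valP j; rewrite inE => /asboolP.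
apply/seteqP; split=> x capx i _; first exact: capx.
have [->//|CHi] := HsC i.
have Ai : i \in A by rewrite inE; apply/asboolP.
by rewrite -(enum_rankK_in Ai Ai); exact: capx.
Qed.

Section Slice.
Variables (R : realType) (n : nat).
Implicit Types (X : set (R * 'rV[R]_n)) (Y : set 'rV[R]_n) (p : 'rV[R]_n * R).

Definition slice X : set 'rV[R]_n := [set x | X (0, x)].

Lemma slice_coneY_Hinf Y : slice (coneY Y `&` @Hinf R n) = Y.
Proof. by apply/seteqP; split=> x //= []. Qed.

Lemma coneY_slice_Hinf X : X `<=` @Hinf R n -> X = coneY (slice X) `&` @Hinf R n.
Proof.
move=> XHinf; apply/seteqP; split=> -[x0 x].
  by move=> Xq; have x00 : x0 = 0 := XHinf _ Xq; subst x0.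
by move=> [Xx x00]; have -> : x0 = 0 := x00.
Qed.

Lemma slice_chyp p : slice (chyp p) = hyp p.1 0.
Proof. by apply/seteqP; split=> x; rewrite /slice /chyp /hyp /= mulr0 subr0. Qed.

Lemma slice_Hinf : slice (@Hinf R n) = setT.
Proof. by apply/seteqP; split. Qed.

Lemma cone_origin (C : set ('rV[R]_n * R)) H : cone C H -> H (0, 0).
Proof.
case=> [->|[p _ ->]] //.
by rewrite /chyp /= mulr0 subr0 /dot trmx0 mulmx0 mxE.
Qed.

Lemma slice_int_lattice (C : set ('rV[R]_n * R)) (A : set (set 'rV[R]_n)) X :
  (forall p, C p -> A (hyp p.1 0)) ->
  int_lattice (cone C) X -> int_lattice A (slice X).
Proof.
move=> CA [r [Hs [coneHs [-> _]]]].
have -> : slice (\bigcap_(i in [set: 'I_r]) Hs i)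
        = \bigcap_(i in [set: 'I_r]) slice (Hs i) by [].
apply: int_lattice_bigcap.
  move=> i; case: (coneHs i) => [->|[p Cp ->]]; first by left; exact: slice_Hinf.
  by right; rewrite slice_chyp; exact: CA.
by exists 0 => i _; exact: cone_origin.
Qed.

Lemma localize_cone_Hinf (C : set ('rV[R]_n * R)) Y :
  localize (cone C) (coneY Y `&` @Hinf R n)
  = cone [set p | C p /\ Y `<=` hyp p.1 0].
Proof.
apply/seteqP; split=> H.
  case=> -[->|[p Cp ->]] sub; first by left.
  by right; exists p => //; split=> // y Yy; rewrite -slice_chyp; exact: sub.
case=> [->|[p [Cp sub] ->]]; first by split; [left|move=> ? []].
split; first by right; exists p.
move=> [x0 x] [Yx x00]; have -> : x0 = 0 := x00.
suff : slice (chyp p) x by [].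
by rewrite slice_chyp; exact: sub.
Qed.

End Slice.

Section Deformation.
Variables (R : realType) (n : nat) (Phip : seq 'rV[R]_n) (a b : 'rV[R]_n -> nat).
Implicit Types (B : set (set 'rV[R]_n)) (Y : set 'rV[R]_n).

Lemma deform_hyp B p : deform Phip B a b p -> B (hyp p.1 0).
Proof. by case=> al [k [_ Bal _ _ ->]]. Qed.

Lemma deform_localize B Y :
  deform Phip (localize B Y) a b = [set p | deform Phip B a b p /\ Y `<=` hyp p.1 0].
Proof.
apply/seteqP; split=> p.
  by case=> al [k [alP [Bal sub] ka kb ->]]; split=> //; exists al, k.
by case=> -[al [k [alP Bal ka kb ep]]] sub; exists al, k; split=> //; rewrite ep in sub.
Qed.

Lemma deform_ext B B' :
  (forall al, al \in Phip -> B (hyp al 0) <-> B' (hyp al 0)) ->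
  deform Phip B a b = deform Phip B' a b.
Proof.
move=> BB'; apply/seteqP; split=> p [al [k [alP Bal ka kb ->]]];
  by exists al, k; split=> //; apply/(BB' _ alP).
Qed.

End Deformation.

Section Reflections.
Variables (R : realType) (n : nat).
Implicit Types (be y : 'rV[R]_n).

Lemma dot_self_eq0 be : dot be be = 0 -> be = 0.
Proof.
have sq_ge0 j : 0 <= be 0 j * be^T j 0 by rewrite mxE -expr2 sqr_ge0.
rewrite /dot mxE => /(psumr_eq0P (fun j _ => sq_ge0 j)) sq0.
by apply/rowP => j; have /eqP := sq0 j isT; rewrite !mxE mulf_eq0 orbb => /eqP.
Qed.

Lemma refl_fixE be y : be != 0 -> refl be y = y <-> dot be y = 0.
Proof.
move=> be0; split; last by move=> by0; rewrite /refl by0 mulr0 mul0r scale0r subr0.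
move/eqP; rewrite subr_eq addrC -subr_eq subrr eq_sym scaler_eq0 (negbTE be0) orbF.
rewrite mulf_eq0 invr_eq0 mulf_eq0 pnatr_eq0 /= => /orP[/eqP //|/eqP /dot_self_eq0 be00].
by move: be0; rewrite be00 eqxx.
Qed.

Lemma refl_arr_parabolic_hyp (Phi : seq 'rV[R]_n) (Y : set 'rV[R]_n) al :
  al \in Phi -> al != 0 ->
  refl_arr (parabolic Phi Y) (hyp al 0) <-> Y `<=` hyp al 0.
Proof.
move=> alPhi al0; split.
  by case=> be [be0 [_ fixY] ->] y /fixY /(refl_fixE _ be0).
move=> sub; exists al; split=> //; split; first exact: W_step (W_id Phi).
by move=> y /sub /(refl_fixE _ al0).
Qed.

End Reflections.

Lemma positive_system_sub (R : realType) n (Phi Phip : seq 'rV[R]_n) :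
  positive_system Phi Phip -> {subset Phip <= Phi}.
Proof. by case=> v [_ Phipv] al /Phipv []. Qed.

Theorem lemma3p1 (R : realType) (n : nat) (Phi Phip : seq 'rV[R]_n)
    (a b : 'rV[R]_n -> nat) :
  root_system Phi -> positive_system Phi Phip ->
  forall X : set (R * 'rV[R]_n),
    int_lattice (cone (deform Phip (weyl_arr Phip) a b)) X ->
    X `<=` @Hinf R n ->
    (exists! Y : set 'rV[R]_n,
        int_lattice (weyl_arr Phip) Y /\ X = coneY Y `&` @Hinf R n) /\
    (forall Y : set 'rV[R]_n,
        int_lattice (weyl_arr Phip) Y -> X = coneY Y `&` @Hinf R n ->
        localize (cone (deform Phip (weyl_arr Phip) a b)) X
          = cone (deform Phip (localize (weyl_arr Phip) Y) a b) /\
        cone (deform Phip (localize (weyl_arr Phip) Y) a b)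
          = cone (deform Phip (refl_arr (parabolic Phi Y)) a b)).
Proof.
move=> [Phi_neq0 _ _ _ _] /positive_system_sub PhipPhi X latX XHinf; split.
  exists (slice X); split.
    split; last exact: coneY_slice_Hinf.
    by apply: slice_int_lattice latX; exact: deform_hyp.
  by move=> Y [_ ->]; rewrite slice_coneY_Hinf.
move=> Y _ ->; split; first by rewrite localize_cone_Hinf deform_localize.
congr cone; apply: deform_ext => al alP.
have alPhi := PhipPhi _ alP.
rewrite refl_arr_parabolic_hyp //; last exact: Phi_neq0.
by split=> [[]//|sub]; split=> //; exists al.
Qed.
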